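(* Let $g:\mathbb{R}\to\mathbb{R}$ be semi-convex (on $\mathbb{R}$) with a modulus $\omega$ such that $$\int_0^1\frac{\omega(t)}{t}\,dt<\infty.$$ Then there exists a separately convex function $f:\mathbb{R}^2\to\mathbb{R}$ such that $f(u,u)=g(u)$ for each $u\in\mathbb{R}$.
   Context: A function $f:\mathbb{R}^d\to\mathbb{R}$ is called separately convex if it is convex on every line parallel to a coordinate axis. A modulus is a non-decreasing function $\omega:[0,\infty)\to[0,\infty)$ with $\lim_{t\to0+}\omega(t)=0$. For a convex set $M$, a real function $g$ defined on a superset of $M$ is semi-convex with modulus $\omega$ on $M$ if $$g(\alpha x+(1-\alpha)y)\le \alpha g(x)+(1-\alpha)g(y)+\alpha(1-\alpha)\|x-y\|\,\omega(\|x-y\|)$$ for all $x,y\in M$ and all $\alpha\in(0,1)$. *)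

From HB Require Import structures.
From mathcomp Require Import all_boot all_order all_algebra.
From mathcomp Require Import all_classical all_reals all_analysis.
Set Implicit Arguments. Unset Strict Implicit. Unset Printing Implicit Defensive.
Import Order.TTheory GRing.Theory Num.Theory.
Import numFieldNormedType.Exports.
Local Open Scope classical_set_scope.
Local Open Scope ring_scope.

(* A modulus: omega : [0,oo) -> [0,oo), non-decreasing, omega t -> 0 as t -> 0+.
   Represented as a function R -> R; values at negative arguments are irrelevant. *)
Definition is_modulus (R : realType) (omega : R -> R) : Prop :=
  (forall t, 0 <= t -> 0 <= omega t) /\
  (forall s t, 0 <= s -> s <= t -> omega s <= omega t) /\
  (omega t @[t --> 0^'+] --> 0).

Definition semi_convex_R (R : realType) (omega g : R -> R) : Prop :=
  forall (x y a : R), 0 < a -> a < 1 ->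
    g (a * x + (1 - a) * y) <=
      a * g x + (1 - a) * g y + a * (1 - a) * `|x - y| * omega `|x - y|.

Definition convex_fun_R (R : realType) (h : R -> R) : Prop :=
  forall (x y a : R), 0 < a -> a < 1 ->
    h (a * x + (1 - a) * y) <= a * h x + (1 - a) * h y.

Definition separately_convex2 (R : realType) (f : R -> R -> R) : Prop :=
  (forall y, convex_fun_R (fun x => f x y)) /\
  (forall x, convex_fun_R (fun y => f x y)).

From HB Require Import structures.
From mathcomp Require Import all_boot all_order all_algebra.
From mathcomp Require Import all_classical all_reals all_analysis.
From mathcomp Require Import ring lra measurable_realfun.
Set Implicit Arguments. Unset Strict Implicit. Unset Printing Implicit Defensive.
Import Order.TTheory GRing.Theory Num.Theory.
Import numFieldNormedType.Exports.
Local Open Scope classical_set_scope.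
Local Open Scope ring_scope.

(* Semi-convexity gives at every point a a slope p(a) such that
     g u >= g a + p(a) (u - a) - |u - a| omega(2 |u - a|)
   for all u, which is sharp near a, and also the same bound with an error
   quadratic in |u - a|, which is what is needed far from a.  The kernel
   kappa x y = - b(x) b(y) + H(x - y), built from a C^1 bump b with |b''| <= 1
   and a Huber function H, is symmetric, convex in each variable, and
   kappa t t = - b(t)^2 is of order - t^2 for |t| <= 1.  Its rescalings to the
   dyadic scales 2^-n, weighted by omega(2^-n), have a summable total weight by
   the Dini condition; they add up to a separately convex psi whose diagonal
   psi t t lies below minus the tangent error.  Hence each
     g a + p(a) ((x + y) / 2 - a) + psi (x - a) (y - a)
   is separately convex, lies below g on the diagonal and touches it at (a, a)
   up to an error that vanishes with the number of scales: f is the supremum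
   of all of them. *)

Section Dyadic.
Variable R : realType.

Definition dyadic (n : nat) : R := (2 ^+ n)^-1.

Lemma dyadic_gt0 n : 0 < dyadic n.
Proof. by rewrite invr_gt0 exprn_gt0. Qed.

Lemma dyadic0 : dyadic 0 = 1.
Proof. by rewrite /dyadic expr0 invr1. Qed.

Lemma dyadicS n : dyadic n.+1 = dyadic n / 2.
Proof. by rewrite /dyadic exprS invfM mulrC. Qed.

Lemma dyadic_le1 n : dyadic n <= 1.
Proof.
elim: n => [|n IH]; first by rewrite dyadic0.
by rewrite dyadicS; have := dyadic_gt0 n; lra.
Qed.

Lemma natr_dyadic_le1 n : n.+1%:R * dyadic n <= 1.
Proof.
elim: n => [|n IH]; first by rewrite dyadic0 mulr1.
by rewrite dyadicS -natr1; have := dyadic_gt0 n; have := dyadic_le1 n; nra.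
Qed.

Lemma dyadic_mul_le (c e : R) : 0 <= c -> 0 < e -> exists N, dyadic N * c <= e.
Proof.
move=> c0 e0; have ce0 : 0 <= c / e by rewrite divr_ge0 // ltW.
exists (Num.truncn (c / e)); have /andP[_] := truncn_itv ce0.
rewrite ltr_pdivrMr // => ltNe; set N := Num.truncn _ in ltNe *.
have := natr_dyadic_le1 N; have := dyadic_gt0 N; nra.
Qed.

Lemma dyadic_bracket N s : dyadic N < s -> s <= dyadic 1 ->
  exists k, (k.+1 < N)%N /\ dyadic k.+2 < s <= dyadic k.+1.
Proof.
elim: N => [|N IH] sN s1; first by rewrite dyadic0 dyadicS dyadic0 in sN s1; lra.
have [/IH[//|k [kN hk]]|Ns] := ltP (dyadic N) s.
  by exists k; split => //; apply: ltn_trans kN _.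
case: N IH sN Ns => [|N] _ sN Ns; first by rewrite dyadicS dyadic0 in sN s1; lra.
by exists N; split => //; apply/andP.
Qed.

End Dyadic.

Section Dini.
Variables (R : realType) (omega : R -> R).
Hypothesis omega_ge0 : forall t, 0 <= t -> 0 <= omega t.
Hypothesis omega_mono : forall s t, 0 <= s -> s <= t -> omega s <= omega t.

Local Notation r := (dyadic R).
Local Notation F := (fun t : R => (omega t / t)%:E).

Lemma measurable_modulus_div : measurable_fun (`]0, 1] : set R) F.
Proof.
apply/measurable_EFinP; apply: measurable_funM.
  pose v (t : R) := if t <= 0 then omega 0 else omega t.
  have mv : measurable_fun (`]0, 1] : set R) v.
    apply: nondecreasing_measurable => // s t st; rewrite /v.
    by case: ifPn => s0; case: ifPn => t0; rewrite -?ltNge in s0 t0;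
      [| apply: omega_mono; lra | lra | apply: omega_mono; lra].
  apply: eq_measurable_fun mv => t; rewrite inE /= in_itv /= => /andP[t0 _].
  by rewrite /v leNgt t0.
apply: (@measurable_funS _ _ _ _ (`]0, 2[ : set R)); first exact: measurable_itv.
  by move=> t /=; rewrite !in_itv /= => /andP[-> ?]; lra.
apply: open_continuous_measurable_fun; first exact: itv_open.
by move=> t; rewrite inE /= in_itv /= => /andP[t0 _]; apply: inv_continuous; rewrite gt_eqF.
Qed.

Lemma modulus_div_ge0 t : t \in `]0, 1] -> (0 <= F t)%E.
Proof.
by rewrite in_itv /= lee_fin => /andP[t0 _]; apply: divr_ge0; [apply: omega_ge0|]; lra.
Qed.

Lemma integral_modulus_div_ge a b : 0 < a -> a < b -> b <= 1 ->
  ((omega a * (b - a) / b)%:E <= \int[lebesgue_measure]_(t in `]a, b]) F t)%E.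
Proof.
move=> a0 ab b1; have wa := omega_ge0 (ltW a0).
apply: (@le_trans _ _ (\int[lebesgue_measure]_(t in `]a, b]) (omega a / b)%:E)%E).
  rewrite integral_cst /=; last exact: measurable_itv.
  by rewrite lebesgue_measure_itv /= lte_fin ab -EFinB -EFinM lee_fin mulrAC.
apply: ge0_le_integral => //.
- by move=> t _; rewrite lee_fin divr_ge0 //; lra.
- apply: measurable_funS measurable_modulus_div => //.
  by move=> t /=; rewrite !in_itv /= => /andP[? ?]; apply/andP; split; lra.
move=> t; rewrite /= in_itv /= lee_fin => /andP[ta tb].
have t0 : 0 < t by lra.
rewrite ler_pdivlMr // mulrAC ler_pdivrMr; last lra.
have := omega_mono (ltW a0) (ltW ta); nra.
Qed.

Lemma dyadic_sum_le_integral N :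
  ((\sum_(n < N) omega (r n.+1) / 2)%:E <=
    \int[lebesgue_measure]_(t in `]r N, 1%R]) F t)%E.
Proof.
elim: N => [|N IH].
  rewrite big_ord0; apply: integral_ge0 => t; rewrite /= in_itv /= dyadic0.
  by move=> /andP[t0 t1]; apply: modulus_div_ge0; rewrite in_itv /=; apply/andP; lra.
have rN := dyadic_gt0 R N; have rN1 := dyadic_le1 R N; have rS := dyadicS R N.
have split_itv : `]r N.+1, 1%R]%classic =
    `]r N.+1, r N]%classic `|` `]r N, 1%R]%classic.
  by rewrite -itv_bndbnd_setU // bnd_simp; lra.
have disj : [disjoint `]r N.+1, r N]%classic & `]r N, 1%R]%classic].
  by apply/disj_set2P; rewrite -subset0 => t [] /= /[!in_itv] /= /andP[_ tN] /andP[Nt _];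
    have := lt_le_trans Nt tN; rewrite ltxx.
have mF : measurable_fun `]r N.+1, 1%R]%classic F.
  apply: measurable_funS measurable_modulus_div => //.
  by move=> t /= /[!in_itv] /= /andP[? ?]; apply/andP; lra.
have F0 t : `]r N.+1, 1%R]%classic t -> (0 <= F t)%E.
  move=> /= /[!in_itv] /= /andP[? ?]; apply: modulus_div_ge0.
  by rewrite in_itv /=; apply/andP; lra.
rewrite split_itv ge0_integral_setU; rewrite -?split_itv //.
rewrite big_ord_recr /= EFinD addeC; apply: leeD => //.
have := @integral_modulus_div_ge (r N.+1) (r N); rewrite rS.
have -> : omega (r N / 2) * (r N - r N / 2) / r N =
  omega (r N / 2) / 2 by field; rewrite gt_eqF.
by apply; lra.
Qed.

Lemma dini_dyadic_sum_bounded :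
  (\int[lebesgue_measure]_(t in `]0%R, 1%R]) F t < +oo)%E ->
  exists S, forall N, \sum_(n < N) omega (r n) <= S.
Proof.
move=> Ifin; set I := (\int[lebesgue_measure]_(t in _) _)%E in Ifin.
have I0 : (0 <= I)%E by apply: integral_ge0 => t /modulus_div_ge0.
have Ifn : I \is a fin_num by rewrite ge0_fin_numE.
exists (omega 1 + 2 * fine I) => N.
have tail : \sum_(n < N) omega (r n.+1) / 2 <= fine I.
  rewrite -lee_fin fineK //; apply: le_trans (dyadic_sum_le_integral N) _.
  apply: ge0_subset_integral => //=.
  - exact: measurable_modulus_div.
  - by move=> t /modulus_div_ge0.
  by move=> t /= /[!in_itv] /= /andP[? ?]; have := dyadic_gt0 R N; lra.
apply: (@le_trans _ _ (\sum_(n < N.+1) omega (r n))).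
  by rewrite big_ord_recr /= lerDl omega_ge0 // ltW // dyadic_gt0.
rewrite big_ord_recl dyadic0 lerD2l -mulr_suml in tail *; lra.
Qed.

End Dini.

Section Convexity.
Variable R : realType.
Implicit Types (h D : R -> R) (A : set R).

Definition subgradient_on h D A :=
  forall x z, A x -> A z -> h z + D z * (x - z) <= h x.

Lemma subgradient_on_le h D A x z : subgradient_on h D A ->
  A x -> A z -> z <= x -> D z <= D x.
Proof.
move=> hD Ax Az; rewrite le_eqVlt => /predU1P[-> //|zx].
have := hD x z Ax Az; have := hD z x Az Ax => h1 h2.
have : 0 <= (D x - D z) * (x - z) by nra.
by rewrite pmulr_lge0 ?subr_gt0 // subr_ge0.
Qed.

Lemma subgradient_on_split h D A b : A b ->
  subgradient_on h D (A `&` [set x | x <= b]) ->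
  subgradient_on h D (A `&` [set x | b <= x]) -> subgradient_on h D A.
Proof.
move=> Ab hl hr x z Ax Az.
have through_b : h z + D z * (b - z) <= h b -> h b + D b * (x - b) <= h x ->
    0 <= (D z - D b) * (b - x) -> h z + D z * (x - z) <= h x by nra.
have [xb|bx] := leP x b; have [zb|bz] := leP z b.
- exact: hl (conj Ax xb) (conj Az zb).
- have Dbz : D b <= D z.
    by apply: (subgradient_on_le hr (conj Az (ltW bz)) (conj Ab (lexx b))); exact: ltW.
  apply: through_b; [exact: hr (conj Ab (lexx b)) (conj Az (ltW bz)) |
                     exact: hl (conj Ax xb) (conj Ab (lexx b)) | ].
  by rewrite mulr_ge0 // subr_ge0.
- have Dzb : D z <= D b by apply: (subgradient_on_le hl (conj Ab (lexx b)) (conj Az zb)).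
  apply: through_b; [exact: hl (conj Ab (lexx b)) (conj Az zb) |
                     exact: hr (conj Ax (ltW bx)) (conj Ab (lexx b)) | ].
  by rewrite -mulrNN mulr_ge0 // opprB subr_ge0 // ltW.
- exact: hr (conj Ax (ltW bx)) (conj Az (ltW bz)).
Qed.

Lemma subgradient_convex h D : subgradient_on h D setT -> convex_fun_R h.
Proof.
move=> hD x y a a0 a1; set m := a * x + (1 - a) * y.
have hx := hD x m I I; have hy := hD y m I I.
have k1 := ler_wpM2l (ltW a0) hx.
have k2 := ler_wpM2l (ltW (ltac:(lra) : 0 < 1 - a)) hy.
have balance : a * (D m * (x - m)) + (1 - a) * (D m * (y - m)) = 0 by rewrite /m; ring.
rewrite !mulrDr in k1 k2; lra.
Qed.

Lemma convex_fun_ext h1 h2 : h1 =1 h2 -> convex_fun_R h1 -> convex_fun_R h2.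
Proof. by move=> e c x y a a0 a1; rewrite -!e; apply: c. Qed.

Lemma convex_funD h1 h2 : convex_fun_R h1 -> convex_fun_R h2 ->
  convex_fun_R (fun x => h1 x + h2 x).
Proof. by move=> c1 c2 x y a a0 a1; have := c1 x y a a0 a1; have := c2 x y a a0 a1; lra. Qed.

Lemma convex_fun_affine (c d : R) : convex_fun_R (fun x => c * x + d).
Proof. by move=> x y a _ _; rewrite le_eqVlt; apply/orP; left; apply/eqP; ring. Qed.

Lemma convex_fun_rescale h (c b r : R) : 0 <= c -> 0 < r -> convex_fun_R h ->
  convex_fun_R (fun x => c * h ((x - b) / r)).
Proof.
move=> c0 r0 ch x y a a0 a1 /=.
have -> : (a * x + (1 - a) * y - b) / r = a * ((x - b) / r) + (1 - a) * ((y - b) / r).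
  by field; rewrite gt_eqF.
by have := ler_wpM2l c0 (ch ((x - b) / r) ((y - b) / r) a a0 a1); lra.
Qed.

Lemma convex_fun_sum N (F : nat -> R -> R) : (forall n, convex_fun_R (F n)) ->
  convex_fun_R (fun x => \sum_(n < N) F n x).
Proof.
move=> cF; elim: N => [|N IH]; first by move=> x y a _ _; rewrite !big_ord0; lra.
apply: (@convex_fun_ext (fun x => \sum_(n < N) F n x + F N x)); last exact: convex_funD.
by move=> x; rewrite big_ord_recr.
Qed.

End Convexity.

Section Profiles.
Variable R : realType.
Implicit Types x y z t c : R.

(* A C^1 bump with cbump t = t + O(t^2) at 0, |cbump''| <= 1 and support
   [-3, 3]; dcbump is its derivative. *)
Definition cbump t : R :=
  if t <= -3 then 0 else if t <= -(3/2) then - (3 + t) ^+ 2 / 6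
  else if t <= 0 then t + t ^+ 2 / 2 else if t <= 3/2 then t - t ^+ 2 / 2
  else if t <= 3 then (3 - t) ^+ 2 / 6 else 0.

Definition dcbump t : R :=
  if t <= -3 then 0 else if t <= -(3/2) then - (3 + t) / 3
  else if t <= 0 then 1 + t else if t <= 3/2 then 1 - t
  else if t <= 3 then - (3 - t) / 3 else 0.

Definition huber t : R :=
  if t <= -6 then - 3 * t - 9 else if t <= 6 then t ^+ 2 / 4 else 3 * t - 9.

Definition dhuber t : R := if t <= -6 then -3 else if t <= 6 then t / 2 else 3.

Local Ltac cases_ifs :=
  repeat case: ifPn => ?;
  repeat match goal with H : is_true (~~ (_ <= _)) |- _ => rewrite -ltNge in H end;
  try (exfalso; lra).

Lemma cbump_far_left t : t <= -3 -> cbump t = 0 /\ dcbump t = 0.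
Proof. by move=> ?; rewrite /cbump /dcbump; cases_ifs. Qed.

Lemma cbump_left_tail t : -3 <= t <= -(3/2) ->
  cbump t = - (3 + t) ^+ 2 / 6 /\ dcbump t = - (3 + t) / 3.
Proof. by case/andP=> ? ?; rewrite /cbump /dcbump; cases_ifs; split; nra. Qed.

Lemma cbump_left_core t : -(3/2) <= t <= 0 ->
  cbump t = t + t ^+ 2 / 2 /\ dcbump t = 1 + t.
Proof. by case/andP=> ? ?; rewrite /cbump /dcbump; cases_ifs; split; nra. Qed.

Lemma cbump_right_core t : 0 <= t <= 3/2 ->
  cbump t = t - t ^+ 2 / 2 /\ dcbump t = 1 - t.
Proof. by case/andP=> ? ?; rewrite /cbump /dcbump; cases_ifs; split; nra. Qed.

Lemma cbump_right_tail t : 3/2 <= t <= 3 ->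
  cbump t = (3 - t) ^+ 2 / 6 /\ dcbump t = - (3 - t) / 3.
Proof. by case/andP=> ? ?; rewrite /cbump /dcbump; cases_ifs; split; nra. Qed.

Lemma cbump_far_right t : 3 <= t -> cbump t = 0 /\ dcbump t = 0.
Proof. by move=> ?; rewrite /cbump /dcbump; cases_ifs; split; nra. Qed.

Local Ltac quadratic_piece L :=
  let x := fresh "x" in let z := fresh "z" in
  move=> x z /= ? ?;
  repeat match goal with H : _ /\ _ |- _ => destruct H end;
  rewrite (proj1 (L x ltac:(try (apply/andP; split); lra)))
    (proj1 (L z ltac:(try (apply/andP; split); lra)))
    (proj2 (L z ltac:(try (apply/andP; split); lra)));
  have := sqr_ge0 (x - z); nra.

Lemma subgradient_cbump c : -1 <= c <= 1 ->
  subgradient_on (fun t => t ^+ 2 / 2 + c * cbump t) (fun t => t + c * dcbump t) setT.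
Proof.
case/andP=> c1 c2.
apply: (subgradient_on_split (b := -3)) => //; first by quadratic_piece cbump_far_left.
apply: (subgradient_on_split (b := -(3/2))); first by rewrite /=; lra.
  by quadratic_piece cbump_left_tail.
apply: (subgradient_on_split (b := 0)); first by rewrite /=; lra.
  by quadratic_piece cbump_left_core.
apply: (subgradient_on_split (b := 3/2)); first by rewrite /=; lra.
  by quadratic_piece cbump_right_core.
apply: (subgradient_on_split (b := 3)); first by rewrite /=; lra.
  by quadratic_piece cbump_right_tail.
by quadratic_piece cbump_far_right.
Qed.

Lemma cbump_taylor x z : `|cbump x - cbump z - dcbump z * (x - z)| <= (x - z) ^+ 2 / 2.
Proof.
have := @subgradient_cbump 1 ltac:(apply/andP; lra) x z I I.
have := @subgradient_cbump (-1) ltac:(apply/andP; lra) x z I I.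
by rewrite ler_norml => ? ?; apply/andP; split; nra.
Qed.

Lemma cbump_norm_le t : `|cbump t| <= 1/2.
Proof.
have := sqr_ge0 (t + 1); have := sqr_ge0 (t - 1).
by rewrite ler_norml /cbump; cases_ifs; nra.
Qed.

Lemma dcbump_norm_le t : `|dcbump t| <= 1.
Proof. by rewrite ler_norml; apply/andP; split; rewrite /dcbump; cases_ifs; lra. Qed.

Lemma cbump0 : cbump 0 = 0.
Proof. by rewrite /cbump; cases_ifs; rewrite expr0n /= mul0r addr0. Qed.

Lemma cbump_sqr_ge s : `|s| <= 1 -> s ^+ 2 / 4 <= cbump s ^+ 2.
Proof.
rewrite ler_norml => /andP[s1 s2].
have := mulr_ge0 (sqr_ge0 s) (mulr_ge0 (ltac:(lra) : 0 <= 1 - s) (ltac:(lra) : 0 <= 3 - s)).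
have := mulr_ge0 (sqr_ge0 s) (mulr_ge0 (ltac:(lra) : 0 <= 1 + s) (ltac:(lra) : 0 <= 3 + s)).
by rewrite /cbump; cases_ifs; nra.
Qed.

Lemma cbump_out t : 3 <= `|t| -> cbump t = 0 /\ dcbump t = 0.
Proof. by rewrite ler_normr => /orP[] ?; rewrite /cbump /dcbump; cases_ifs; split; nra. Qed.

Lemma cbump_sqr_dist_le x y : (cbump x - cbump y) ^+ 2 <= 2 * `|x - y|.
Proof.
set u := cbump x - cbump y; set d := x - y.
have u1 : `|u| <= 1.
  by apply: le_trans (ler_normB _ _) _; have := cbump_norm_le x; have := cbump_norm_le y; lra.
have ud : `|u| <= `|d| + `|d| ^+ 2 / 2.
  have tay := cbump_taylor x y; rewrite -/u -/d in tay.
  rewrite -[u](subrK (dcbump y * d)) real_normK ?num_real //.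
  apply: le_trans (ler_normD _ _) _; rewrite normrM.
  by have := dcbump_norm_le y; have := normr_ge0 d; nra.
have u2 : u ^+ 2 <= `|u| by rewrite -real_normK ?num_real //; have := normr_ge0 u; nra.
by have [d1|d1] := lerP `|d| 1; have := normr_ge0 d; nra.
Qed.

Lemma huber_left t : t <= -6 -> huber t = - 3 * t - 9 /\ dhuber t = -3.
Proof. by move=> ?; rewrite /huber /dhuber; cases_ifs. Qed.

Lemma huber_mid t : -6 <= t <= 6 -> huber t = t ^+ 2 / 4 /\ dhuber t = t / 2.
Proof. by case/andP=> ? ?; rewrite /huber /dhuber; cases_ifs; split; nra. Qed.

Lemma huber_right t : 6 <= t -> huber t = 3 * t - 9 /\ dhuber t = 3.
Proof. by move=> ?; rewrite /huber /dhuber; cases_ifs; split; nra. Qed.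

Lemma subgradient_huber : subgradient_on huber dhuber setT.
Proof.
apply: (subgradient_on_split (b := -6)) => //; first by quadratic_piece huber_left.
apply: (subgradient_on_split (b := 6)); first by rewrite /=; lra.
  by quadratic_piece huber_mid.
by quadratic_piece huber_right.
Qed.

Lemma huberN t : huber (- t) = huber t.
Proof. by rewrite /huber sqrrN; cases_ifs; nra. Qed.

Lemma huber0 : huber 0 = 0.
Proof. by rewrite /huber; cases_ifs; rewrite expr0n /= mul0r. Qed.

Lemma huber_le t : huber t <= 3 * `|t|.
Proof.
by rewrite /huber; have [t0|t0] := lerP 0 t; [rewrite ger0_norm | rewrite ltr0_norm];
  cases_ifs; nra.
Qed.

End Profiles.

Section Kernel.
Variable R : realType.
Implicit Types x y z : R.

Definition kappa x y := - (cbump x * cbump y) + huber (x - y).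
Definition dkappa x y := - (dcbump x * cbump y) + dhuber (x - y).

Lemma kappa_far x y : 6 <= `|x - y| ->
  kappa x y = huber (x - y) /\ dkappa x y = dhuber (x - y).
Proof.
move=> xy; rewrite /kappa /dkappa.
suff [-> ->] : cbump x * cbump y = 0 /\ dcbump x * cbump y = 0 by rewrite oppr0 !add0r.
have [/cbump_out[-> ->]|x3] := lerP 3 `|x|; first by rewrite !mul0r.
have [-> _] : cbump y = 0 /\ dcbump y = 0.
  by apply: cbump_out; have := ler_normB x y; lra.
by rewrite !mulr0.
Qed.

Lemma subgradient_kappa y : subgradient_on (kappa^~ y) (dkappa^~ y) setT.
Proof.
have far x z : 6 <= `|x - y| -> 6 <= `|z - y| ->
    kappa z y + dkappa z y * (x - z) <= kappa x y.
  move=> /kappa_far[-> _] /kappa_far[-> ->].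
  by have := @subgradient_huber R (x - y) (z - y) I I; rewrite opprB addrA subrK.
apply: (subgradient_on_split (b := y - 6)) => //.
  by move=> x z /= [_ ?] [_ ?]; apply: far; rewrite ler_normr; apply/orP; right; lra.
apply: (subgradient_on_split (b := y + 6)); [by rewrite /=; lra | | ]; last first.
  by move=> x z /= [_ ?] [_ ?]; apply: far; rewrite ler_normr; apply/orP; left; lra.
move=> x z /= [[_ ?] ?] [[_ ?] ?]; rewrite /kappa /dkappa.
have [-> _] := @huber_mid R (x - y) ltac:(apply/andP; lra).
have [-> ->] := @huber_mid R (z - y) ltac:(apply/andP; lra).
have := cbump_taylor x z; have := cbump_norm_le y.
rewrite !ler_norml => /andP[c1 c2] /andP[b1 b2].
set B := cbump x - cbump z - dcbump z * (x - z) in b1 b2.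
set c := cbump y in c1 c2 *.
(* |c * B| <= (x - z)^2 / 4: exactly the convexity margin of the Huber part. *)
have p1 : 0 <= (1/2 - c) * ((x - z) ^+ 2 / 2 + B) by apply: mulr_ge0; lra.
have p2 : 0 <= (1/2 + c) * ((x - z) ^+ 2 / 2 - B) by apply: mulr_ge0; lra.
have -> : cbump x = B + cbump z + dcbump z * (x - z) by rewrite /B; ring.
nra.
Qed.

Lemma kappa_convex y : convex_fun_R (kappa^~ y).
Proof. exact: subgradient_convex (subgradient_kappa y). Qed.

Lemma kappaC x y : kappa x y = kappa y x.
Proof. by rewrite /kappa mulrC -huberN opprB. Qed.

Lemma kappa_diag x : kappa x x = - cbump x ^+ 2.
Proof. by rewrite /kappa subrr huber0 addr0 expr2. Qed.

Lemma kappa_le_mean x y :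
  kappa x y <= (kappa x x + kappa y y) / 2 + 4 * `|x - y|.
Proof.
rewrite !kappa_diag /kappa.
by have := cbump_sqr_dist_le x y; have := huber_le (x - y); nra.
Qed.

End Kernel.

Section SemiconvexSlope.
Variables (R : realType) (omega g : R -> R).
Hypothesis omega_ge0 : forall t, 0 <= t -> 0 <= omega t.
Hypothesis omega_mono : forall s t, 0 <= s -> s <= t -> omega s <= omega t.
Hypothesis g_semiconvex : semi_convex_R omega g.
Implicit Types a h k u : R.

Definition lslope a h := (g a - g (a - h)) / h.
Definition rslope a k := (g (a + k) - g a) / k.

Lemma lslope_le_rslope a h k : 0 < h -> 0 < k -> lslope a h <= rslope a k + omega (h + k).
Proof.
move=> h0 k0; have hk : 0 < h + k by rewrite addr_gt0.
set al := k / (h + k).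
have al0 : 0 < al by rewrite divr_gt0.
have al1 : al < 1 by rewrite ltr_pdivrMr // mul1r ltrDr.
have := g_semiconvex (a - h) (a + k) al0 al1.
have -> : al * (a - h) + (1 - al) * (a + k) = a by rewrite /al; field; rewrite gt_eqF.
have -> : `|a - h - (a + k)| = h + k.
  by rewrite (_ : a - h - (a + k) = - (h + k)) ?normrN ?gtr0_norm //; ring.
set W := omega (h + k) => conv.
have cleared : k * (g a - g (a - h)) <= h * (g (a + k) - g a) + h * k * W.
  have := ler_wpM2l (ltW hk) conv.
  have -> : (h + k) * (al * g (a - h) + (1 - al) * g (a + k) + al * (1 - al) * (h + k) * W) =
    k * g (a - h) + h * g (a + k) + h * k * W by rewrite /al; field; rewrite gt_eqF.
  lra.
rewrite -subr_ge0 /lslope /rslope.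
have -> : (g (a + k) - g a) / k + W - (g a - g (a - h)) / h =
  (h * (g (a + k) - g a) + h * k * W - k * (g a - g (a - h))) / (h * k).
  by field; rewrite !gt_eqF.
by rewrite divr_ge0 ?mulr_ge0 ?subr_ge0 // ltW.
Qed.

Lemma lslope_le_rslope_omega a h k : 0 < h -> 0 < k ->
  lslope a h - omega (2 * h) <= rslope a k + omega (2 * k).
Proof.
move=> h0 k0; have := lslope_le_rslope a h0 k0.
have := @omega_ge0 (2 * h) ltac:(lra); have := @omega_ge0 (2 * k) ltac:(lra).
have [hk|kh] := lerP h k.
  have : omega (h + k) <= omega (2 * k) by apply: omega_mono; lra.
  lra.
have : omega (h + k) <= omega (2 * h) by apply: omega_mono; lra.
lra.
Qed.

Definition slope a := sup [set lslope a h - omega (2 * h) | h in [set h | 0 < h]].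

Lemma lslope_le_slope a h : 0 < h -> lslope a h - omega (2 * h) <= slope a.
Proof.
move=> h0; apply: ub_le_sup; last by exists h.
exists (rslope a 1 + omega (2 * 1)) => _ [k k0 <-].
exact: lslope_le_rslope_omega.
Qed.

Lemma slope_le_rslope a k : 0 < k -> slope a <= rslope a k + omega (2 * k).
Proof.
move=> k0; apply: ge_sup.
  by exists (lslope a 1 - omega (2 * 1)); exists 1 => //; exact: ltr01.
by move=> _ [h h0 <-]; exact: lslope_le_rslope_omega.
Qed.

Lemma semiconvex_tangent a u :
  g a + slope a * (u - a) - `|u - a| * omega (2 * `|u - a|) <= g u.
Proof.
have [ua|au|->] := ltgtP u a; last by rewrite subrr normr0 !mul0r mulr0 addr0 subr0.
  have h0 : 0 < a - u by rewrite subr_gt0.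
  have := lslope_le_slope a h0; rewrite /lslope subKr lerBlDr ler_pdivrMr //.
  by rewrite ltr0_norm ?subr_lt0 // opprB; nra.
have k0 : 0 < u - a by rewrite subr_gt0.
have := slope_le_rslope a k0; rewrite /rslope subrKC -lerBlDr ler_pdivlMr //.
by rewrite gtr0_norm //; nra.
Qed.

Lemma slope_almost_mono a b : a <= b <= a + 1/2 -> slope a - 2 * omega 1 <= slope b.
Proof.
case/andP=> ab ba; have w1 := @omega_ge0 1 ler01.
have [->|ab'] := eqVneq a b; first lra.
have d0 : 0 < b - a by rewrite subr_gt0 lt_neqAle ab' ab.
have := semiconvex_tangent a b; have := semiconvex_tangent b a.
rewrite distrC !gtr0_norm // => hba hab.
have : omega (2 * (b - a)) <= omega 1 by apply: omega_mono; lra.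
have : 0 <= (slope b - slope a + 2 * omega (2 * (b - a))) * (b - a) by nra.
by rewrite pmulr_lge0 //; lra.
Qed.

Lemma semiconvex_tangent_nat (n : nat) a u : `|u - a| <= n%:R / 2 ->
  g a + slope a * (u - a) - 2 * omega 1 * n%:R * `|u - a| <= g u.
Proof.
have w1 := @omega_ge0 1 ler01.
elim: n a u => [|n IH] a u hn.
  have -> : u = a by apply/eqP; rewrite -subr_eq0 -normr_le0; lra.
  by rewrite subrr normr0 !mulr0 subr0 addr0.
rewrite -natr1 in hn *; have n0 : 0 <= n%:R :> R by [].
have [near|far] := lerP `|u - a| (1/2).
  have : omega (2 * `|u - a|) <= omega 1 by apply: omega_mono; [rewrite mulr_ge0 | lra].
  move=> /(ler_wpM2l (normr_ge0 (u - a))).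
  have : 0 <= omega 1 * (2 * n%:R + 1) * `|u - a| by rewrite !mulr_ge0 //; lra.
  by have := semiconvex_tangent a u; lra.
have [v [va [uv dslope]]] : exists v, `|v - a| = 1/2 /\ `|u - v| = `|u - a| - 1/2 /\
    - (2 * omega 1 * `|u - v|) <= (slope v - slope a) * (u - v).
  have [au|ua] := lerP a u.
    rewrite ger0_norm ?subr_ge0 // in far *.
    exists (a + 1/2); rewrite addrAC subrr add0r !ger0_norm; try lra.
    do 2!split; try lra.
    by have := @slope_almost_mono a (a + 1/2) ltac:(apply/andP; lra); nra.
  rewrite ltr0_norm ?subr_lt0 // in far *.
  exists (a - 1/2); rewrite addrAC subrr add0r normrN ger0_norm ?ltr0_norm; try lra.
  do 2!split; try lra.
  by have := @slope_almost_mono (a - 1/2) a ltac:(apply/andP; lra); nra.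
have := IH v u ltac:(lra); have := semiconvex_tangent a v.
rewrite va (_ : 2 * (1/2) = 1 :> R); last by field.
nra.
Qed.

Lemma semiconvex_tangent_global a u :
  g a + slope a * (u - a) - 2 * omega 1 * (2 * `|u - a| + 1) * `|u - a| <= g u.
Proof.
have w1 := @omega_ge0 1 ler01.
have x0 : 0 <= 2 * `|u - a| by rewrite mulr_ge0.
have /andP[t1 t2] := truncn_itv x0.
have := @semiconvex_tangent_nat (Num.truncn (2 * `|u - a|)).+1 a u ltac:(lra).
have : 0 <= 2 * omega 1 * (2 * `|u - a| + 1 - (Num.truncn (2 * `|u - a|)).+1%:R) * `|u - a|.
  by rewrite -natr1 mulr_ge0 // mulr_ge0 //; lra.
lra.
Qed.

End SemiconvexSlope.

Section Extension.
Variables (R : realType) (omega g : R -> R) (S : R).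
Hypothesis omega_ge0 : forall t, 0 <= t -> 0 <= omega t.
Hypothesis omega_mono : forall s t, 0 <= s -> s <= t -> omega s <= omega t.
Hypothesis g_semiconvex : semi_convex_R omega g.
Hypothesis dyadic_sum_le : forall N, \sum_(n < N) omega (dyadic R n) <= S.

Local Notation r := (dyadic R).
Local Notation p := (slope omega g).

(* weight k lets the k-th term of psi absorb the local tangent error when
   r k.+2 < |t| <= r k.+1; quadratic_weight absorbs the global one when
   1/2 <= |t|.  The term r N * omega 2 of the minorant covers |t| <= r N. *)
Definition weight n := 16 * omega (r n).
Definition quadratic_weight := 8 * omega 1.

Definition psi N (X Y : R) :=
  - (quadratic_weight * X * Y) + \sum_(n < N) weight n * r n * kappa (X / r n) (Y / r n).

Definition minorant a N (x y : R) :=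
  g a - r N * omega 2 + p a * ((x + y) / 2 - a) + psi N (x - a) (y - a).

Lemma weight_ge0 n : 0 <= weight n.
Proof. by rewrite mulr_ge0 // omega_ge0 // ltW // dyadic_gt0. Qed.

Lemma minorantC a N x y : minorant a N x y = minorant a N y x.
Proof.
rewrite /minorant /psi (addrC x y) mulrAC.
by congr (_ + (_ + _)); apply: eq_bigr => n _; rewrite kappaC.
Qed.

Lemma minorant_convex a N y : convex_fun_R (minorant a N ^~ y).
Proof.
apply: (@convex_fun_ext _ (fun x => ((p a / 2 - quadratic_weight * (y - a)) * x +
    (g a - r N * omega 2 + p a * (y / 2 - a) + quadratic_weight * a * (y - a))) +
    \sum_(n < N) weight n * r n * kappa ((x - a) / r n) ((y - a) / r n))).
  by move=> x; rewrite /minorant /psi; ring.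
apply: convex_funD; first exact: convex_fun_affine.
apply: (@convex_fun_sum _ N
  (fun n x => weight n * r n * kappa ((x - a) / r n) ((y - a) / r n))) => n.
have rn := dyadic_gt0 R n.
exact: (convex_fun_rescale a (mulr_ge0 (weight_ge0 n) (ltW rn)) rn (kappa_convex _)).
Qed.

Lemma quadratic_weight_ge0 : 0 <= quadratic_weight.
Proof. by rewrite mulr_ge0 // omega_ge0. Qed.

Lemma psi_diag N t :
  psi N t t =
  - (quadratic_weight * t ^+ 2) - \sum_(n < N) weight n * r n * cbump (t / r n) ^+ 2.
Proof.
rewrite /psi expr2 mulrA -sumrN; congr (_ + _).
by apply: eq_bigr => n _; rewrite kappa_diag mulrN.
Qed.

Lemma psi_le_mean N X Y : psi N X Y <= (psi N X X + psi N Y Y) / 2 +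
  quadratic_weight * (X - Y) ^+ 2 / 2 + 4 * `|X - Y| * \sum_(n < N) weight n.
Proof.
suff : \sum_(n < N) weight n * r n * kappa (X / r n) (Y / r n) <=
    \sum_(n < N) ((weight n * r n * kappa (X / r n) (X / r n) +
                  weight n * r n * kappa (Y / r n) (Y / r n)) / 2 + 4 * `|X - Y| * weight n).
  by rewrite big_split /= -mulr_suml -mulr_sumr big_split /= /psi; nra.
apply: ler_sum => n _; have rn := dyadic_gt0 R n.
have := ler_wpM2l (mulr_ge0 (weight_ge0 n) (ltW rn)) (kappa_le_mean (X / r n) (Y / r n)).
rewrite -mulrBl normrM [`|(r n)^-1|]gtr0_norm ?invr_gt0 //.
move/le_trans; apply; rewrite le_eqVlt; apply/orP; left; apply/eqP.
by field; rewrite gt_eqF.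
Qed.

Lemma weighted_term_ge0 n t : 0 <= weight n * r n * cbump (t / r n) ^+ 2.
Proof. by rewrite mulr_ge0 ?sqr_ge0 // mulr_ge0 ?weight_ge0 // ltW // dyadic_gt0. Qed.

Lemma psi_diag_le_term N k t : (k < N)%N ->
  psi N t t <= - (quadratic_weight * t ^+ 2) - weight k * r k * cbump (t / r k) ^+ 2.
Proof.
move=> kN; rewrite psi_diag lerD2l lerN2 (bigD1 (Ordinal kN)) //= lerDl.
by apply: sumr_ge0 => n _; exact: weighted_term_ge0.
Qed.

Lemma psi_diag_le N t : psi N t t <= - (quadratic_weight * t ^+ 2).
Proof.
by rewrite psi_diag gerBl; apply: sumr_ge0 => n _; exact: weighted_term_ge0.
Qed.

Lemma weight_term_ge k t : r k.+2 < `|t| <= r k.+1 ->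
  `|t| * omega (2 * `|t|) <= weight k * r k * cbump (t / r k) ^+ 2.
Proof.
rewrite !dyadicS => /andP[t1 t2]; have rk := dyadic_gt0 R k.
have wk := omega_ge0 (ltW rk).
have sq : (t / r k) ^+ 2 / 4 <= cbump (t / r k) ^+ 2.
  by apply: cbump_sqr_ge; rewrite normrM normfV [`|r k|]gtr0_norm // ler_pdivrMr //; lra.
apply: le_trans (ler_wpM2l (mulr_ge0 (weight_ge0 k) (ltW rk)) sq).
have -> : weight k * r k * ((t / r k) ^+ 2 / 4) = 4 * omega (r k) * `|t| ^+ 2 / r k.
  by rewrite /weight real_normK ?num_real //; field; rewrite gt_eqF.
have : omega (2 * `|t|) <= omega (r k).
  by apply: omega_mono; [rewrite mulr_ge0 | lra].
move=> /(ler_wpM2l (normr_ge0 t)) /(ler_wpM2r (ltW rk)) h1.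
have h2 : `|t| * omega (r k) * r k <= `|t| * omega (r k) * (4 * `|t|).
  by apply: ler_wpM2l; [rewrite mulr_ge0 | lra].
by rewrite ler_pdivlMr //; nra.
Qed.

Lemma psi_diag_le_near N t : `|t| < 1/2 ->
  psi N t t <= r N * omega 2 - `|t| * omega (2 * `|t|).
Proof.
move=> t2; have rN := dyadic_gt0 R N; have w2 := @omega_ge0 2 (ler0n _ 2).
have t0 := normr_ge0 t.
have q := mulr_ge0 quadratic_weight_ge0 (sqr_ge0 t).
have [tN|Nt] := lerP `|t| (r N).
  have : `|t| * omega (2 * `|t|) <= r N * omega 2.
    apply: ler_pM => //; first by apply: omega_ge0; lra.
    by apply: omega_mono; have := dyadic_le1 R N; lra.
  by have := psi_diag_le N t; lra.
have [k [kN hk]] := @dyadic_bracket R N `|t| Nt ltac:(rewrite dyadicS dyadic0; lra).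
have := psi_diag_le_term t (ltnW kN); have := weight_term_ge hk.
by have := mulr_ge0 (ltW rN) w2; lra.
Qed.

Lemma psi_diag_le_far N t : 1/2 <= `|t| ->
  psi N t t <= - (2 * omega 1 * (2 * `|t| + 1) * `|t|).
Proof.
move=> t2; have w1 := @omega_ge0 1 ler01.
have : 0 <= omega 1 * `|t| * (2 * `|t| - 1) by rewrite !mulr_ge0 //; lra.
have := psi_diag_le N t.
by rewrite /quadratic_weight -real_normK ?num_real //; nra.
Qed.

Lemma minorant_diag_le a N u : minorant a N u u <= g u.
Proof.
have -> : minorant a N u u = g a + p a * (u - a) + (psi N (u - a) (u - a) - r N * omega 2).
  by rewrite /minorant; field.
have := mulr_ge0 (ltW (dyadic_gt0 R N)) (@omega_ge0 2 (ler0n _ 2)).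
have [far|near] := lerP (1/2) `|u - a|.
  have := psi_diag_le_far N far.
  by have := semiconvex_tangent_global omega_ge0 omega_mono g_semiconvex a u; lra.
have := psi_diag_le_near N near.
by have := semiconvex_tangent omega_ge0 omega_mono g_semiconvex a u; lra.
Qed.

Lemma minorant_le_mean a N x y : minorant a N x y <=
  (g x + g y) / 2 + quadratic_weight * (x - y) ^+ 2 / 2 + 64 * S * `|x - y|.
Proof.
have := psi_le_mean N (x - a) (y - a); rewrite (_ : x - a - (y - a) = x - y); last by ring.
have : 4 * `|x - y| * \sum_(n < N) weight n <= 64 * S * `|x - y|.
  by rewrite /weight -mulr_sumr; have := dyadic_sum_le N; have := normr_ge0 (x - y); nra.
have := minorant_diag_le a N x; have := minorant_diag_le a N y; rewrite /minorant.
have -> : p a * ((x + y) / 2 - a) =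
  (p a * ((x + x) / 2 - a) + p a * ((y + y) / 2 - a)) / 2 by field.
lra.
Qed.

Definition extension x y := sup [set minorant a N x y | a in [set: R] & N in [set: nat]].

Lemma extension_ge a N x y : minorant a N x y <= extension x y.
Proof.
apply: ub_le_sup; last by exists a => //; exists N.
exists ((g x + g y) / 2 + quadratic_weight * (x - y) ^+ 2 / 2 + 64 * S * `|x - y|).
by move=> _ [b _ [M _ <-]]; exact: minorant_le_mean.
Qed.

Lemma extension_le x y B : (forall a N, minorant a N x y <= B) -> extension x y <= B.
Proof.
move=> hB; apply: ge_sup; first by exists (minorant 0 0 x y), 0 => //; exists 0%N.
by move=> _ [a _ [N _ <-]].
Qed.

Lemma extensionC x y : extension x y = extension y x.
Proof.
rewrite /extension; congr sup; apply/seteqP; split=> _ [a _ [N _ <-]];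
  by exists a => //; exists N => //; rewrite minorantC.
Qed.

Lemma extension_convex y : convex_fun_R (extension ^~ y).
Proof.
move=> x1 x2 t t0 t1; apply: extension_le => a N.
apply: le_trans (minorant_convex a N y x1 x2 t0 t1) _.
have := ler_wpM2l (ltW t0) (extension_ge a N x1 y).
have := ler_wpM2l (ltW (ltac:(lra) : 0 < 1 - t)) (extension_ge a N x2 y).
lra.
Qed.

Lemma extension_diag u : extension u u = g u.
Proof.
apply/eqP; rewrite eq_le extension_le; last by move=> a N; exact: minorant_diag_le.
apply/ler_addgt0Pr => e e0.
have [N hN] := dyadic_mul_le (@omega_ge0 2 (ler0n _ 2)) e0.
have := extension_ge u N u u.
rewrite /minorant subrr (_ : (u + u) / 2 - u = 0); last by field.
rewrite psi_diag expr0n /= mulr0 big1 => [|n _]; first lra.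
by rewrite mul0r cbump0 expr0n /= mulr0.
Qed.

End Extension.

Theorem theorem1p2 (R : realType) (g omega : R -> R) :
  is_modulus omega ->
  semi_convex_R omega g ->
  (\int[lebesgue_measure]_(t in `]0%R, 1%R]) ((omega t / t)%:E) < +oo)%E ->
  exists f : R -> R -> R, separately_convex2 f /\ (forall u : R, f u u = g u).
Proof.
move=> [omega_ge0 [omega_mono _]] g_semiconvex dini.
have [S sum_le] := dini_dyadic_sum_bounded omega_ge0 omega_mono dini.
have diag := extension_diag omega_ge0 omega_mono g_semiconvex sum_le.
have convex_x := extension_convex omega_ge0 omega_mono g_semiconvex sum_le.
exists (extension omega g); split=> //; split=> // x.
by apply: convex_fun_ext (convex_x x) => y; rewrite extensionC.
Qed.
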